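(* Let $X\subseteq Y$ be FK-spaces containing $\phi$. Then $E(X)\subseteq E(Y)$ for each of $E=D_p^qS,\ D_p^qW,\ D_p^qF,\ D_p^qF^+,\ D_p^qB,\ D_p^qB^+$.
   Context: An FK-space is a vector subspace of the space $w$ of all complex sequences with a complete metrizable locally convex topology in which coordinate functionals are continuous; $X'$ is its continuous dual. $\delta^j$ has $1$ in position $j$, $0$ elsewhere; $\phi=\operatorname{span}\{\delta^j\}$. $p(n)<q(n)$ are nonnegative integer sequences with $q(n)\to\infty$. For $x\in w$, $x^{(k)}=\sum_{j=1}^kx_j\delta^j$ and $T_n(x)=\frac{1}{q(n)-p(n)}\sum_{k=p(n)+1}^{q(n)}x^{(k)}$. For an FK-space $X\supseteq\phi$: $D_p^qS(X)=\{x\in X: T_n(x)\to x \text{ in } X\}$; $D_p^qW(X)=\{x\in X: f(T_n(x))\to f(x)\ \forall f\in X'\}$; $D_p^qF^+(X)=\{x\in w: \lim_n f(T_n(x))\text{ exists }\forall f\in X'\}$; $D_p^qB^+(X)=\{x\in w:\sup_n|f(T_n(x))|<\infty\ \forall f\in X'\}$; $D_p^qF(X)=D_p^qF^+(X)\cap X$; $D_p^qB(X)=D_p^qB^+(X)\cap X$. *)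

(* Complex scalars: C := R[i] (real_closed's complex numbers) over an
   arbitrary realType R (every realType is isomorphic to the reals). *)
From HB Require Import structures.
From mathcomp Require Import all_boot all_order all_algebra.
From mathcomp Require Import complex.
From mathcomp Require Import all_classical all_reals.
From mathcomp Require Import topology normedtype tvs.
Set Implicit Arguments. Unset Strict Implicit. Unset Printing Implicit Defensive.
Import Order.TTheory GRing.Theory Num.Theory.
Import numFieldTopology.Exports numFieldNormedType.Exports.
Local Open Scope classical_set_scope.
Local Open Scope ring_scope.

(* Equip C = R[i] with its usual (modulus) metric topology, as for any
   numFieldType (the generic instance is not found automatically for the
   concrete type constructor complex). *)
HB.instance Definition _ (R : realType) :=
  PseudoPointedMetric.copy (R[i]) (R[i])^o.

Section FK.
Variable R : realType.
Local Notation C := (R[i]).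

(* the space w of all complex sequences; the paper's coordinate x_j
   (j >= 1) is stored at index j-1, i.e. x : nat -> C, x_j = x (j.-1). *)
Definition w := nat -> C.

Definition delta (j : nat) : w := fun i => if i == j.-1 then 1 else 0.

(* x^{(k)} = sum_{j=1}^k x_j delta^j : keeps coordinates 1..k *)
Definition sect (k : nat) (x : w) : w := fun i => if (i < k)%N then x i else 0.

Definition Tn (p q : nat -> nat) (n : nat) (x : w) : w :=
  fun i => ((q n - p n)%:R)^-1 * \sum_((p n).+1 <= k < (q n).+1) sect k x i.

(* An FK-space is represented by a locally convex topological vector space
   E over C (a tvsType, whose uniformity is the canonical one of the
   topological group E) together with a linear injection iota : E -> w;
   the subspace of w is range iota, carrying the topology transported
   from E. *)
Definition is_FK (E : tvsType C) (iota : E -> w) : Prop :=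
  [/\ (forall (a : C) (u v : E) (i : nat), iota (a *: u + v) i = a * iota u i + iota v i),
      injective iota,
      (forall i : nat, continuous (fun v : E => iota v i)),
      countable_uniformity E                        (* metrizable *)
    & (forall F : set_system E, ProperFilter F -> cauchy F -> exists x : E, F --> x)
    ].

Definition contains_phi (E : tvsType C) (iota : E -> w) : Prop :=
  forall j : nat, (0 < j)%N -> exists v : E, iota v = delta j.

Definition dual (E : tvsType C) (f : E -> C) : Prop :=
  (forall (a : C) (u v : E), f (a *: u + v) = a * f u + f v) /\ continuous f.

Definition reprT (E : tvsType C) (iota : E -> w) (p q : nat -> nat)
  (x : w) (v : nat -> E) : Prop := forall n, iota (v n) = Tn p q n x.

Definition DS (E : tvsType C) (iota : E -> w) (p q : nat -> nat) : set w :=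
  [set x | exists v0 : E, iota v0 = x /\
     exists v : nat -> E, reprT iota p q x v /\ v n @[n --> \oo] --> v0].

Definition DW (E : tvsType C) (iota : E -> w) (p q : nat -> nat) : set w :=
  [set x | exists v0 : E, iota v0 = x /\
     exists v : nat -> E, reprT iota p q x v /\
       forall f : E -> C, dual f -> f (v n) @[n --> \oo] --> f v0].

Definition DFplus (E : tvsType C) (iota : E -> w) (p q : nat -> nat) : set w :=
  [set x | exists v : nat -> E, reprT iota p q x v /\
       forall f : E -> C, dual f -> exists l : C, f (v n) @[n --> \oo] --> l].

Definition DBplus (E : tvsType C) (iota : E -> w) (p q : nat -> nat) : set w :=
  [set x | exists v : nat -> E, reprT iota p q x v /\
       forall f : E -> C, dual f -> exists M : C, forall n, `|f (v n)| <= M].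

Definition DF (E : tvsType C) (iota : E -> w) (p q : nat -> nat) : set w :=
  DFplus iota p q `&` range iota.

Definition DB (E : tvsType C) (iota : E -> w) (p q : nat -> nat) : set w :=
  DBplus iota p q `&` range iota.

End FK.

From HB Require Import structures.
From mathcomp Require Import all_boot all_order all_algebra.
From mathcomp Require Import complex.
From mathcomp Require Import all_classical all_reals.
From mathcomp Require Import topology normedtype tvs.
Import Order.TTheory GRing.Theory Num.Theory.
Import numFieldNormedType.Exports.
Local Open Scope classical_set_scope.
Local Open Scope ring_scope.

(* Coordinates are continuous on both FK-spaces, so the inclusion J : X -> Y has
   a closed graph; by the closed graph theorem for F-spaces it is continuous.
   Composing with J then transports representing sequences, their limits and
   their boundedness, since f \o J lies in X' whenever f lies in Y'.

   Baire's theorem for complete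
   uniform spaces with a countable base shows that the closure of the preimage
   of a 0-neighbourhood of Y is a 0-neighbourhood of X; successive
   approximation then writes every x near 0 as a series whose image series
   converges in Y, by Klee's argument that a complete metrizable vector space
   is also complete for its translation-invariant uniformity. *)

Lemma dependent_choice {A : Type} {P : nat -> A -> Prop} {Q : nat -> A -> A -> Prop} :
  (forall k a, P k a -> exists2 a', P k.+1 a' & Q k a a') ->
  forall a0, P 0%N a0 ->
  exists u : nat -> A, u 0%N = a0 /\ forall k, P k (u k) /\ Q k (u k) (u k.+1).
Proof.
move=> step a0 Pa0.
have step' (ka : nat * A) : exists a', P ka.1 ka.2 -> P ka.1.+1 a' /\ Q ka.1 ka.2 a'.
  case: ka => k a; have [/step [a' Pa' Qa']|nPa] := pselect (P k a).
    by exists a'.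
  by exists a => /nPa.
have [g Hg] := choice step'.
pose u := fix u k := if k is k.+1 then g (k, u k) else a0.
have Pu k : P k (u k) by elim: k => // k IH; exact: (Hg (k, u k) IH).1.
by exists u; split=> // k; split=> //; exact: (Hg (k, u k) (Pu k)).2.
Qed.

Lemma cauchy_seq (T : uniformType) (u : nat -> T) :
  (forall A, entourage A ->
     exists N, forall m n, (N <= m)%N -> (N <= n)%N -> A (u m, u n)) ->
  cauchy (u @ \oo).
Proof.
move=> uC A /uC [N NA].
exists (u @` [set m | (N <= m)%N], u @` [set m | (N <= m)%N]).
  by split; exists N => // m Nm; exists m.
by move=> [a b] /= [[m Nm <-] [n Nn <-]]; exact: NA.
Qed.

Lemma nbhs_fine_entourage {T : uniformType} {z : T} {U : set T} {S : set (T * T)} :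
  nbhs z U -> entourage S -> exists2 E, entourage E &
    (forall w y, E (z, w) -> E (w, y) -> U y) /\
    (forall a b c, E (a, b) -> E (a, c) -> S (b, c)).
Proof.
move=> /nbhsP [A entA AU] entS.
exists (split_ent A `&` (split_ent S `&` (split_ent S)^-1)%relation).
  apply: filterI; first exact: entourage_split_ent.
  exact/entourage_invI/entourage_split_ent.
split=> [w y [zw _] [wy _]|a b c [_ [_ ab]] [_ [ac _]]].
  by apply: AU; apply/xsectionP; exact: (entourage_split w).
exact: (entourage_split a).
Qed.

Definition complete_uniform (T : uniformType) :=
  forall F : set_system T, ProperFilter F -> cauchy F -> exists x : T, F --> x.

Section Baire_uniform.
Context {T : uniformType}.
Hypotheses (cuT : countable_uniformity T) (cplT : complete_uniform T).

Theorem Baire_uniform (O : nat -> set T) :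
  (forall k, open (O k) /\ dense (O k)) -> dense (\bigcap_k O k).
Proof.
move=> odO D [d Dd] oD.
have [f fsub fent] := iffLR countable_uniformityP cuT.
(* Nested balls: at step k the two-step E-ball around the centre z lies in
   D `&` O k and E is finer than f k, so the centres form a Cauchy sequence. *)
pose Inv k (zE : T * set (T * T)) := [/\ entourage zE.2,
  forall w y, zE.2 (zE.1, w) -> zE.2 (w, y) -> (D `&` O k) y &
  forall a b c, zE.2 (a, b) -> zE.2 (a, c) -> f k (b, c)].
have [z0 [Dz0 Oz0]] := (odO 0%N).2 D (ex_intro _ d Dd) oD.
have [E0 entE0 [E0D E0f]] := nbhs_fine_entourage
  (open_nbhs_nbhs (conj (openI oD (odO 0%N).1) (conj Dz0 Oz0))) (fent 0%N).
have step k zE : Inv k zE -> exists2 zE', Inv k.+1 zE' &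
    forall w y, zE'.2 (zE'.1, w) -> zE'.2 (w, y) -> zE.2 (zE.1, y).
  case: zE => z E [/= entE ED _].
  have [z' [/interior_subset/xsectionP zz' Oz']] := (odO k.+1).2 _
    (ex_intro _ z (nbhs_singleton (nbhs_interior (nbhs_entourage z
      (entourage_split_ent entE))))) (open_interior _).
  have Dz' : D z'.
    by have [] := ED z' z' (split_ent_subset entE zz') (entourage_refl _ entE).
  have Uz' : nbhs z' ((D `&` O k.+1) `&` xsection (split_ent E) z').
    apply: filterI; last exact/nbhs_entourage/entourage_split_ent.
    exact/open_nbhs_nbhs/(conj (openI oD (odO k.+1).1)).
  have [E' entE' [E'U E'f]] := nbhs_fine_entourage Uz' (fent k.+1).
  exists (z', E').
    by split=> // w y zw /(E'U _ _ zw) [].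
  move=> w y /= zw /(E'U _ _ zw) [_ /xsectionP z'y].
  exact: (entourage_split z').
have [u [_ /all_and2 [uInv unest]]] :=
  dependent_choice step (z0, E0) (And3 entE0 E0D E0f).
pose z k := (u k).1.
have chain k i : (u k).2 (z k, z (k + i)%N).
  elim: i k => [|i IH] k.
    by rewrite addn0; apply: entourage_refl; case: (uInv k).
  rewrite -addSnnS; apply: (unest k (z k.+1)); last exact: IH.
  by apply: entourage_refl; case: (uInv k.+1).
have {}chain k n : (k <= n)%N -> (u k).2 (z k, z n) by move/subnKC <-.
have [l zl] : exists l : T, z @ \oo --> l.
  apply: (cplT (z @ \oo)); apply: cauchy_seq => A /fsub [N fNA].
  exists N => m n Nm Nn; apply: fNA.
  by have [_ _ small] := uInv N; apply: (small (z N)); exact: chain.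
have DOl k : (D `&` O k) l.
  have [entE ED _] := uInv k.
  have [N _ NE] := cvg_entourage zl (entourage_inv entE).
  apply: (ED (z (maxn N k))); first exact/chain/leq_maxr.
  exact: NE (leq_maxl N k).
by exists l; split=> [|k _]; [exact: (DOl 0%N).1|exact: (DOl k).2].
Qed.

End Baire_uniform.

Lemma closed_cover_interior {T : uniformType} (x0 : T) (F : nat -> set T) :
  countable_uniformity T -> complete_uniform T ->
  (forall n, closed (F n)) -> (forall x, exists n, F n x) -> exists n, (F n)° !=set0.
Proof.
move=> cuT cplT Fc Fcov; apply: contrapT => /forallNP noint.
have dFC n : open (~` F n) /\ dense (~` F n).
  split=> [|O [o Oo] oO]; first by rewrite openC.
  apply: contrapT => nOF; apply: (noint n); exists o.
  apply: filterS (open_nbhs_nbhs (conj oO Oo)) => y Oy.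
  by apply: contrapT => nFy; apply: nOF; exists y.
have [x [_ xF]] := Baire_uniform cuT cplT _ dFC setT (ex_intro _ x0 I) openT.
by have [n Fnx] := Fcov x; exact: xF n I Fnx.
Qed.

Lemma countable_nbhs_basis {T : uniformType} (x : T) : countable_uniformity T ->
  exists b : nat -> set T, (forall k, nbhs x (b k)) /\
    forall U, nbhs x U -> \forall k \near \oo, b k `<=` U.
Proof.
move=> /countable_uniformityP [f fsub fent].
exists (fun k y => forall i, (i <= k)%N -> f i (x, y)); split.
  elim=> [|k IH].
    apply: filterS (nbhs_entourage x (fent 0%N)) => y /xsectionP fy i.
    by rewrite leqn0 => /eqP ->.
  apply: filterS (filterI IH (nbhs_entourage x (fent k.+1))) => y [fy /xsectionP fky] i.
  by rewrite leq_eqVlt ltnS => /predU1P [->|]; [|exact: fy].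
move=> U /nbhsP [A /fsub [N fNA] AU]; exists N => // k Nk y fy.
by apply: AU; apply/xsectionP; apply: fNA; exact: fy.
Qed.

Section nbhs_product.
Variables (S T U : topologicalType) (f : S -> T -> U) (a : S) (b : T).
Hypothesis fc : {for (a, b), continuous (fun p : S * T => f p.1 p.2)}.

Lemma nbhs_continuous2P (V : set U) : nbhs (f a b) V ->
  exists2 AB : set S * set T, nbhs a AB.1 /\ nbhs b AB.2 &
    forall s t, AB.1 s -> AB.2 t -> V (f s t).
Proof.
move=> /fc [[A B] /= [Aa Bb] ABV]; exists (A, B) => // s t As Bt.
exact: (ABV (s, t)).
Qed.

Lemma nbhs_continuous2_fixl (V : set U) : nbhs (f a b) V -> nbhs b (fun t => V (f a t)).
Proof.
move=> /nbhs_continuous2P [[A B] /= [Aa Bb] ABV].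
by apply: filterS Bb => t; apply: ABV; exact: nbhs_singleton.
Qed.

Lemma nbhs_continuous2_fixr (V : set U) : nbhs (f a b) V -> nbhs a (fun s => V (f s b)).
Proof.
move=> /nbhs_continuous2P [[A B] /= [Aa Bb] ABV].
by apply: filterS Aa => s As; apply: ABV => //; exact: nbhs_singleton.
Qed.

End nbhs_product.

Section topological_Zmodule.
Context {E : topologicalZmodType}.

Lemma nbhs0_addl {x : E} {U : set E} : nbhs x U -> nbhs 0 (fun u => U (x + u)).
Proof.
rewrite -{1}[x]addr0.
exact: (@nbhs_continuous2_fixl E E E _ _ _ (@add_continuous E (x, 0))).
Qed.

Lemma nbhs0_subl {x : E} {U : set E} : nbhs x U -> nbhs 0 (fun u => U (x - u)).
Proof.
rewrite -{1}[x]subr0.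
exact: (@nbhs_continuous2_fixl E E E (fun u v => u - v) _ _ (@sub_continuous E (x, 0))).
Qed.

Lemma nbhs_subr (x : E) {W : set E} : nbhs 0 W -> nbhs x (fun y => W (y - x)).
Proof.
rewrite -(subrr x).
exact: (@nbhs_continuous2_fixr E E E (fun u v => u - v) _ _ (@sub_continuous E (x, x))).
Qed.

Lemma nbhs_subl (x : E) {W : set E} : nbhs 0 W -> nbhs x (fun y => W (x - y)).
Proof.
rewrite -(subrr x).
exact: (@nbhs_continuous2_fixl E E E (fun u v => u - v) _ _ (@sub_continuous E (x, x))).
Qed.

Lemma nbhs0_add_split {V : set E} : nbhs 0 V ->
  exists2 W, nbhs 0 W & forall a b, W a -> W b -> V (a + b).
Proof.
rewrite -{1}[0 : E]addr0.
move=> /(@nbhs_continuous2P E E E _ _ _ (@add_continuous E (0, 0))).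
move=> [[A B] /= [A0 B0] ABV].
by exists (A `&` B) => [|a b [Aa _] [_ Bb]]; [exact: filterI|exact: ABV].
Qed.

Lemma nbhs0_sub_split {V : set E} : nbhs 0 V ->
  exists2 W, nbhs 0 W & forall a b, W a -> W b -> V (a - b).
Proof.
rewrite -{1}[0 : E]subr0.
move=> /(@nbhs_continuous2P E E E (fun u v => u - v) _ _ (@sub_continuous E (0, 0))).
move=> [[A B] /= [A0 B0] ABV].
by exists (A `&` B) => [|a b [Aa _] [_ Bb]]; [exact: filterI|exact: ABV].
Qed.

End topological_Zmodule.

Lemma nbhs0_scaler {K : numDomainType} {E : topologicalLmodType K} (c : K) {Q : set E} :
  nbhs 0 Q -> nbhs 0 (fun u => Q (c *: u)).
Proof.
rewrite -{1}(scaler0 _ c).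
exact: (@nbhs_continuous2_fixl K^o E E _ _ _ (@scale_continuous K E (c, 0))).
Qed.

Lemma nbhs0_harmonicC (R : realType) (B : set R[i]^o) :
  nbhs 0 B -> exists n : nat, B n.+1%:R^-1.
Proof.
move=> /nbhs_ballP [[a b] /= + eB]; rewrite ltcE /= => /andP [/eqP b0 a0].
exists (Num.truncn a^-1); apply: eB; rewrite -ball_normE /= sub0r normrN b0 complexr0.
rewrite -(rmorph_nat (real_complex R)) -fmorphV ger0_norm ?ler0c ?invr_ge0 // ltcR.
by rewrite -ltf_pV2 ?posrE ?invr_gt0 // invrK truncnS_gt.
Qed.

Lemma nbhs0_absorbing {R : realType} {E : topologicalLmodType R[i]} (y : E) {W : set E} :
  nbhs 0 W -> exists n : nat, W (n.+1%:R^-1 *: y).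
Proof.
rewrite -(scale0r y).
move=> /(@nbhs_continuous2_fixr R[i]^o E E _ _ _ (@scale_continuous _ E (0, y))).
exact: nbhs0_harmonicC.
Qed.

Lemma closure_chain {E : topologicalZmodType} {G B : nat -> set E} :
  (forall k, nbhs 0 (B k)) -> (forall k, B k `<=` closure (G k)) ->
  forall x, B 0%N x -> exists r : nat -> E, r 0%N = x /\
    forall k, B k (r k) /\ G k (r k - r k.+1).
Proof.
move=> B0 BG; apply: (@dependent_choice _ B (fun k y y' => G k (y - y'))).
move=> k y /BG /(_ _ (nbhs_subl y (B0 k.+1))) [z [Gz Bz]].
by exists (y - z) => //; rewrite subKr.
Qed.

(* The uniformity of a tvsType is only required to induce its topology, not to
   be translation invariant, so completeness says nothing directly about
   sequences that are Cauchy for the group structure. *)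
Definition group_cauchy {E : topologicalZmodType} (t : nat -> E) :=
  forall U, nbhs 0 U -> exists N, forall m n, (N <= m)%N -> (N <= n)%N -> U (t m - t n).

Section Klee.
Context {K : numDomainType} {E : tvsType K} {t : nat -> E}.
Hypothesis tC : group_cauchy t.

(* If z is in every translate_cauchy (f k), for a countable base f of
   entourages, then z + t n is Cauchy; Baire provides such a z. *)
Let translate_cauchy (A : set (E * E)) (z : E) := exists2 W, nbhs 0 W &
  exists M, forall a b m n, W a -> W b -> (M <= m)%N -> (M <= n)%N ->
    A (z + a + t m, z + b + t n).

Let translate_cauchy_open A : open (translate_cauchy A).
Proof.
rewrite openE => z [W W0 [M MA]].
have [W' W'0 W'W] := nbhs0_add_split W0.
apply: filterS (nbhs_subr z W'0) => y yz; exists W' => //; exists M.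
move=> a b m n W'a W'b Mm Mn.
have yE c : y + c = z + (y - z + c) by rewrite addrA addrCA subrr addr0.
by rewrite (yE a) (yE b); apply: MA => //; exact: W'W.
Qed.

Let translate_cauchy_dense A : entourage A -> dense (translate_cauchy A).
Proof.
move=> entA O [z0 Oz0] oO.
have [N1 N1O] := tC _ (nbhs0_addl (open_nbhs_nbhs (conj oO Oz0))).
pose e := z0 + t N1.
have [W W0 WW] := nbhs0_add_split (nbhs0_addl
  (nbhs_entourage e (entourage_invI (entourage_split_ent entA)))).
have [M1 M1W] := tC _ W0; pose M := maxn M1 N1.
exists (z0 + (t N1 - t M)); split; first by apply: N1O => //; rewrite leq_maxr.
exists W => //; exists M => a b m n Wa Wb Mm Mn.
have zE c k : z0 + (t N1 - t M) + c + t k = e + (c + (t k - t M)).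
  by rewrite /e -!addrA; congr (_ + (_ + _)); rewrite addrCA [- _ + _]addrC.
have M1M : (M1 <= M)%N by rewrite leq_maxl.
have /xsectionP [_ ea] := WW _ _ Wa (M1W m M (leq_trans M1M Mm) M1M).
have /xsectionP [eb _] := WW _ _ Wb (M1W n M (leq_trans M1M Mn) M1M).
by rewrite !zE; exact: (entourage_split e).
Qed.

Theorem group_cauchy_cvg : countable_uniformity E -> complete_uniform E ->
  exists y : E, t @ \oo --> y.
Proof.
move=> cuE cplE; have [f fsub fent] := iffLR countable_uniformityP cuE.
have [z [_ Gz]] := Baire_uniform cuE cplE _
  (fun k => conj (translate_cauchy_open (f k)) (translate_cauchy_dense _ (fent k)))
  setT (ex_intro _ 0 I) openT.
have [w zw] : exists w : E, (fun n => z + t n) @ \oo --> w.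
  apply: (cplE ((fun n => z + t n) @ \oo)); apply: cauchy_seq => A /fsub [k fkA].
  have [W /nbhs_singleton W0 [M MA]] := Gz k I.
  exists M => m n Mm Mn; apply: fkA.
  by rewrite -[z]addr0; apply: MA.
exists (w - z) => U /nbhs0_addl /(nbhs_subr w) /zw; apply: (filterS (F := \oo)) => n /=.
by rewrite addrC -addrA addKr addrAC subrr add0r.
Qed.

End Klee.

Section halving_chain.
Context {E : topologicalZmodType} {N : nat -> set E} {a : nat -> E}.
Hypotheses (N0 : forall k, N k 0) (NS : forall k u v, N k.+1 u -> N k.+1 v -> N k (u + v)).
Hypothesis aN : forall i, N i.+1 (a i).

Lemma halving_chain_sum n m : N n (\sum_(n <= i < n + m) a i).
Proof.
elim: m n => [|m IH] n; first by rewrite addn0 big_geq.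
rewrite big_ltn; last by rewrite addnS ltnS leq_addr.
by rewrite -addSnnS; exact: NS.
Qed.

Lemma halving_chain_cauchy : (forall U, nbhs 0 U -> exists k, N k `<=` U) ->
  group_cauchy (fun k => \sum_(0 <= i < k) a i).
Proof.
move=> Nsmall U /nbhs0_sub_split [W /Nsmall [K NKW] WU]; exists K => m n Km Kn.
pose S j := \sum_(0 <= i < j) a i.
have tail j : (K <= j)%N -> S j - S K = \sum_(K <= i < K + (j - K)) a i.
  by move=> Kj; rewrite subnKC // /S (big_cat_nat (leq0n K) Kj) addrC addKr.
have -> : S m - S n = (S m - S K) - (S n - S K) by rewrite opprB addrA subrK.
by apply: WU; apply: NKW; rewrite tail //; exact: halving_chain_sum.
Qed.

End halving_chain.

Lemma nbhs0_halving_chain {E : topologicalZmodType} {V : set E} {b : nat -> set E} :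
  nbhs 0 V -> (forall k, nbhs 0 (b k)) -> exists N : nat -> set E, [/\ N 0%N = V,
    forall k, nbhs 0 (N k), forall k u v, N k.+1 u -> N k.+1 v -> N k (u + v) &
    forall k, N k.+1 `<=` b k].
Proof.
move=> V0 b0.
have step k U : nbhs 0 U -> exists2 U', nbhs 0 U' &
    (forall a c, U' a -> U' c -> U (a + c)) /\ U' `<=` b k.
  move=> /nbhs0_add_split [W W0 WU]; exists (W `&` b k); first exact: filterI.
  by split=> [a c [Wa _] [Wc _]|y []]; [exact: WU|].
have [N [N0 /all_and2 [NP /all_and2 [NS Nb]]]] := dependent_choice step V V0.
by exists N.
Qed.

Section closed_graph.
Variables (R : realType) (X Y : tvsType R[i]).
Hypotheses (cuX : countable_uniformity X) (cplX : complete_uniform X).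
Variable J : {linear X -> Y}.

(* X is covered by the closed sets A n below, so by Baire some A n has an
   interior point p; differences of points of A n close to p + c d and to p
   then approximate d. *)
Lemma nbhs0_closure_preimage (V : set Y) : nbhs 0 V -> nbhs 0 (closure (J @^-1` V)).
Proof.
move=> /nbhs0_sub_split [W W0 WV].
pose s n : R[i] := n.+1%:R^-1.
pose A n := closure [set x | W (J (s n *: x))].
have [n [p /= Ap]] : exists n, (A n)° !=set0.
  apply: (closed_cover_interior 0 _ cuX cplX) => [n|x]; first exact: closed_closure.
  have [n Wx] := nbhs0_absorbing (J x) W0.
  by exists n; apply: subset_closure; rewrite /= linearZ.
pose c : R[i] := n.+1%:R.
have cs (d : X) : s n *: (c *: d) = d by rewrite scalerA mulVf ?pnatr_eq0 // scale1r.
apply: filterS (nbhs0_scaler c (nbhs0_addl Ap)) => d Ad B.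
rewrite -{1}(cs d).
move=> /(@nbhs_continuous2_fixl R[i]^o X X _ _ _ (@scale_continuous _ X (s n, c *: d))).
rewrite -[c *: d](addrK p).
move=> /(@nbhs_continuous2P X X X (fun u v => u - v) _ _ (@sub_continuous X (c *: d + p, p))).
move=> [[U1 U2] /= [U1d U2p] UB].
rewrite addrC in Ad; have [u [Wu U1u]] := Ad U1 U1d.
have [v [Wv U2v]] := nbhs_singleton Ap U2 U2p.
exists (s n *: (u - v)); split; last exact: UB.
by rewrite /= scalerBr linearB; exact: WV.
Qed.

Hypotheses (cuY : countable_uniformity Y) (cplY : complete_uniform Y).
Hypothesis Jcl : forall (u : nat -> X) (x : X) (y : Y),
  u @ \oo --> x -> (J \o u) @ \oo --> y -> y = J x.

(* x is the sum of the series r k - r k.+1; its image series is group-Cauchy in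
   Y, hence converges by Klee, and the closed graph identifies the limit as J x. *)
Lemma closed_graph_nbhs0 (V : set Y) : nbhs 0 V -> nbhs 0 (J @^-1` V).
Proof.
move=> /nbhs0_sub_split [W W0 WV].
have [bX [bX0 bXsmall]] := countable_nbhs_basis (0 : X) cuX.
have [bY [bY0 bYsmall]] := countable_nbhs_basis (0 : Y) cuY.
have [N [NW N0 NS Nb]] := nbhs0_halving_chain W0 bY0.
have N0' k : N k 0 := nbhs_singleton (N0 k).
pose B k := closure (J @^-1` N k.+1) `&` bX k.
have B0 k : nbhs 0 (B k) by apply: filterI (bX0 k); exact: nbhs0_closure_preimage.
apply: filterS (B0 0%N) => x Bx.
have [r [r0 /all_and2 [rB rN]]] :=
  closure_chain (G := fun k => J @^-1` N k.+1) B0 (fun k => @subIsetl _ _ _) x Bx.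
pose t k := \sum_(0 <= i < k) J (r i - r i.+1).
have tE k : t k = J (x - r k).
  rewrite /t -linear_sum (telescope_sumr_eq (fun i => - r i)) // => [|i _].
    by rewrite r0 opprK addrC.
  by rewrite opprK addrC.
have Nsmall U : nbhs 0 U -> exists k, N k `<=` U.
  by move=> /bYsmall [k _ bYU]; exists k.+1; exact: subset_trans (Nb k) (bYU k (leqnn k)).
have [y ty] := group_cauchy_cvg (halving_chain_cauchy N0' NS rN Nsmall) cuY cplY.
have rx : (fun k => x - r k) @ \oo --> x.
  move=> U /nbhs0_subl /bXsmall; apply: (filterS (F := \oo)) => k bXU.
  exact/bXU/(rB k).2.
have yJx : y = J x.
  by apply: Jcl rx _; rewrite (_ : J \o _ = t) //; apply/funext => k; rewrite /= tE.
have [K _ KW] := ty _ (nbhs_subr y W0).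
rewrite /= -yJx -[y](subKr (t K)); apply: WV (KW K (leqnn K)).
by rewrite -NW; exact: (halving_chain_sum N0' NS rN 0 K).
Qed.

Theorem closed_graph_continuous : continuous J.
Proof.
move=> x U /nbhs0_addl /closed_graph_nbhs0 /(nbhs_subr x).
by apply: filterS => y; rewrite /= linearB subrKC.
Qed.

End closed_graph.

Lemma FK_inclusion {R : realType} {EX EY : tvsType R[i]}
    {iX : EX -> w R} {iY : EY -> w R} :
  is_FK iX -> is_FK iY -> range iX `<=` range iY ->
  exists J : {linear EX -> EY}, continuous J /\ forall u, iY (J u) = iX u.
Proof.
move=> [linX _ contX cuX cplX] [linY injY contY cuY cplY] XY.
have exJ u : exists v, iY v = iX u by have [v _ vu] := XY _ (imageT iX u); exists v.
have [J JE] := choice exJ.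
have Jlin : linear J.
  by move=> a u v; apply: injY; apply/funext => i; rewrite linY !JE linX.
pose JL : {linear EX -> EY} := HB.pack J (GRing.isLinear.Build _ _ _ _ J Jlin).
exists JL; split=> //; apply: closed_graph_continuous => // u x y ux Juy.
apply: injY; apply/funext => i; rewrite JE.
have uiY : (fun n => iX (u n) i) @ \oo --> iY y i.
  rewrite (_ : (fun n => _) = (fun n => iY (J (u n)) i)); last by apply/funext => n; rewrite JE.
  exact: cvg_comp _ _ Juy (contY i y).
have uiX : (fun n => iX (u n) i) @ \oo --> iX x i := cvg_comp _ _ ux (contX i x).
apply: (cvg_unique _ uiY uiX); exact: (@norm_hausdorff _ R[i]^o).
Qed.

Section FK_transfer.
Context {R : realType} {p q : nat -> nat} {EX EY : tvsType R[i]}.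
Context {iX : EX -> w R} {iY : EY -> w R} {J : {linear EX -> EY}}.
Hypotheses (Jc : continuous J) (JE : forall u, iY (J u) = iX u).

Lemma reprT_comp x v : reprT iX p q x v -> reprT iY p q x (J \o v).
Proof. by move=> xv n; rewrite /= JE. Qed.

Lemma dual_comp (f : EY -> R[i]) : dual f -> dual (f \o J).
Proof.
move=> [flin fc]; split=> [a u v|u]; first by rewrite /= linearP flin.
exact: continuous_comp (Jc u) (fc (J u)).
Qed.

Lemma range_FK_sub : range iX `<=` range iY.
Proof. by move=> _ [u _ <-]; exists (J u). Qed.

Lemma DS_sub : DS iX p q `<=` DS iY p q.
Proof.
move=> x [v0 [<- [v [xv vv0]]]]; exists (J v0); split; first exact: JE.
by exists (J \o v); split; [exact: reprT_comp|exact: cvg_comp vv0 (Jc v0)].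
Qed.

Lemma DW_sub : DW iX p q `<=` DW iY p q.
Proof.
move=> x [v0 [<- [v [xv fv]]]]; exists (J v0); split; first exact: JE.
by exists (J \o v); split; [exact: reprT_comp|move=> f /dual_comp /fv].
Qed.

Lemma DFplus_sub : DFplus iX p q `<=` DFplus iY p q.
Proof.
move=> x [v [xv fv]].
by exists (J \o v); split; [exact: reprT_comp|move=> f /dual_comp /fv].
Qed.

Lemma DBplus_sub : DBplus iX p q `<=` DBplus iY p q.
Proof.
move=> x [v [xv fv]].
by exists (J \o v); split; [exact: reprT_comp|move=> f /dual_comp /fv].
Qed.

Lemma DF_sub : DF iX p q `<=` DF iY p q.
Proof. exact: setISS DFplus_sub range_FK_sub. Qed.

Lemma DB_sub : DB iX p q `<=` DB iY p q.
Proof. exact: setISS DBplus_sub range_FK_sub. Qed.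

End FK_transfer.

Theorem mainTheorem7 (R : realType) (p q : nat -> nat)
  (hpq : forall n, (p n < q n)%N)
  (hq : forall M : nat, exists N : nat, forall n, (N <= n)%N -> (M <= q n)%N)
  (EX : tvsType (R[i])) (iX : EX -> w R)
  (EY : tvsType (R[i])) (iY : EY -> w R)
  (hX : is_FK iX) (hY : is_FK iY)
  (phiX : contains_phi iX) (phiY : contains_phi iY)
  (hXY : range iX `<=` range iY) :
  (DS iX p q `<=` DS iY p q) /\
  (DW iX p q `<=` DW iY p q) /\
  (DF iX p q `<=` DF iY p q) /\
  (DFplus iX p q `<=` DFplus iY p q) /\
  (DB iX p q `<=` DB iY p q) /\
  (DBplus iX p q `<=` DBplus iY p q).
Proof.
have [J [Jc JE]] := FK_inclusion hX hY hXY.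
split; first exact: DS_sub Jc JE.
split; first exact: DW_sub Jc JE.
split; first exact: DF_sub Jc JE.
split; first exact: DFplus_sub Jc JE.
split; first exact: DB_sub Jc JE.
exact: DBplus_sub Jc JE.
Qed.
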